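(* Each of the formulas D1 $=i(x,x)$, D2 $=i(i(x,x),i(n(x),n(x)))$, D3 $=i(i(x,x),i(i(y,y),i(i(x,y),i(x,y))))$ has a double-negation-free condensed-detachment proof from the axioms A1 $=i(x,i(y,x))$, A2 $=i(i(x,y),i(i(y,z),i(x,z)))$, A3 $=i(i(i(x,y),y),i(i(y,x),x))$, A4 $=i(i(n(x),n(y)),i(y,x))$.
   Context: Formulas are terms built from propositional variables using the binary connective $i$ (implication) and the unary connective $n$ (negation). Condensed detachment: from a major premiss $i(A,B)$ and a minor premiss $C$, after renaming variables so that the two premisses share no variables, if $A$ and $C$ are unifiable with most general unifier $\sigma$, infer $B\sigma$; alphabetic variants of axioms count as axioms and conclusions may be renamed. A proof is double-negation free if none of its deduced (non-axiom) steps has a subformula of the form $n(n(t))$. *)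

From Stdlib Require Import List Arith.
Import ListNotations.

Inductive form : Type :=
| V : nat -> form
| I : form -> form -> form
| N : form -> form.

Fixpoint subst (s : nat -> form) (f : form) : form :=
  match f with
  | V v => s v
  | I a b => I (subst s a) (subst s b)
  | N a => N (subst s a)
  end.

Definition rename (r : nat -> nat) (f : form) : form := subst (fun v => V (r v)) f.

Definition variant (F G : form) : Prop :=
  exists r : nat -> nat, (forall u v, r u = r v -> u = v) /\ G = rename r F.

Fixpoint occurs (v : nat) (f : form) : Prop :=
  match f with
  | V w => v = w
  | I a b => occurs v a \/ occurs v b
  | N a => occurs v a
  end.

Definition unifier (s : nat -> form) (A B : form) : Prop := subst s A = subst s B.

Definition mgu (s : nat -> form) (A B : form) : Prop :=
  unifier s A B /\
  forall t, unifier t A B -> exists r : nat -> form, forall v, t v = subst r (s v).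

Definition cd (P Q R : form) : Prop :=
  exists A B Q' s,
    P = I A B /\ variant Q Q' /\
    (forall v, occurs v P -> ~ occurs v Q') /\
    mgu s A Q' /\ variant (subst s B) R.

Fixpoint subformula (t f : form) : Prop :=
  t = f \/
  match f with
  | V _ => False
  | I a b => subformula t a \/ subformula t b
  | N a => subformula t a
  end.

Definition has_dneg (f : form) : Prop := exists t, subformula (N (N t)) f.

Definition x := V 0.
Definition y := V 1.
Definition z := V 2.

Definition A1 := I x (I y x).
Definition A2 := I (I x y) (I (I y z) (I x z)).
Definition A3 := I (I (I x y) y) (I (I y x) x).
Definition A4 := I (I (N x) (N y)) (I y x).
Definition axioms : list form := [A1; A2; A3; A4].

Definition D1 := I x x.
Definition D2 := I (I x x) (I (N x) (N x)).
Definition D3 := I (I x x) (I (I y y) (I (I x y) (I x y))).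

(* Justification of a proof line: an axiom (variant), or CD with major line i, minor line j. *)
Inductive just : Type :=
| Ax : just
| CD : nat -> nat -> just.

Definition line_form (pf : list (form * just)) (k : nat) : option form :=
  option_map fst (nth_error pf k).

Definition valid_line (pf : list (form * just)) (k : nat) : Prop :=
  match nth_error pf k with
  | Some (F, Ax) => exists A, In A axioms /\ variant A F
  | Some (F, CD i j) =>
      i < k /\ j < k /\
      exists P Q, line_form pf i = Some P /\ line_form pf j = Some Q /\ cd P Q F
  | None => False
  end.

Definition cd_proof (pf : list (form * just)) (F : form) : Prop :=
  pf <> [] /\
  (forall k, k < length pf -> valid_line pf k) /\
  line_form pf (length pf - 1) = Some F.

Definition dn_free (pf : list (form * just)) : Prop :=
  forall k F i j, nth_error pf k = Some (F, CD i j) -> ~ has_dneg F.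

From Stdlib Require Import List Arith Lia Bool FinFun.
Import ListNotations.

(** Each formula is the last line of an explicit condensed-detachment derivation
    from A1-A4 none of whose lines contains n(n(t)); checking such a derivation
    comes down to computing most general unifiers.  These are computed with
    Robinson's rules (decomposition and variable elimination): each rule
    preserves the set of unifiers of the pending equations, so every unifier of
    the input factors through the result, and that the result is a unifier at
    all is checked by evaluation. *)

Definition form_eq_dec (F G : form) : {F = G} + {F <> G}.
Proof. decide equality; apply Nat.eq_dec. Defined.

Lemma subst_comp s t f : subst t (subst s f) = subst (fun v => subst t (s v)) f.
Proof. induction f; simpl; congruence. Qed.

Lemma subst_ext s t f : (forall v, s v = t v) -> subst s f = subst t f.
Proof. intros Hst; induction f; simpl; congruence. Qed.

Lemma occurs_rename v r f : occurs v (rename r f) -> exists u, occurs u f /\ v = r u.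
Proof.
  induction f as [u|a IHa b IHb|a IHa]; simpl.
  - eauto.
  - intros [Ha|Hb]; [destruct (IHa Ha) | destruct (IHb Hb)]; firstorder.
  - exact IHa.
Qed.

Lemma variant_refl f : variant f f.
Proof.
  exists (fun v => v); split; [intros u v; exact id|].
  unfold rename; induction f; simpl; congruence.
Qed.

Fixpoint max_var (f : form) : nat :=
  match f with
  | V v => v
  | I a b => Nat.max (max_var a) (max_var b)
  | N a => max_var a
  end.

Lemma occurs_le_max_var v f : occurs v f -> v <= max_var f.
Proof. induction f; simpl; intuition lia. Qed.

Definition shift (k : nat) (f : form) : form := rename (Nat.add k) f.

Lemma variant_shift k f : variant f (shift k f).
Proof. exists (Nat.add k); split; [intros u v; lia | reflexivity]. Qed.

Lemma occurs_shift v k f : occurs v (shift k f) -> k <= v.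
Proof. intros Hv; destruct (occurs_rename _ _ _ Hv) as [u [_ ->]]; lia. Qed.

Fixpoint vars (f : form) : list nat :=
  match f with
  | V v => [v]
  | I a b => vars a ++ vars b
  | N a => vars a
  end.

Definition bind (v : nat) (g : form) (u : nat) : form := if u =? v then g else V u.

Definition solves (t : nat -> form) (E : list (form * form)) : Prop :=
  Forall (fun e => subst t (fst e) = subst t (snd e)) E.

Definition respects (t : nat -> form) (bs : list (nat * form)) : Prop :=
  Forall (fun b => t (fst b) = subst t (snd b)) bs.

Definition eliminate_eqs v g (E : list (form * form)) : list (form * form) :=
  map (fun e => (subst (bind v g) (fst e), subst (bind v g) (snd e))) E.

Definition eliminate_binds v g (bs : list (nat * form)) : list (nat * form) :=
  (v, g) :: map (fun b => (fst b, subst (bind v g) (snd b))) bs.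

(* No occurs check: the result of [unify] is only used after checking that it is a unifier. *)
Fixpoint unify (fuel : nat) (E : list (form * form)) (bs : list (nat * form))
  : option (list (nat * form)) :=
  match fuel with
  | 0 => None
  | S fuel =>
      match E with
      | [] => Some bs
      | (V v, g) :: E | (g, V v) :: E =>
          unify fuel (eliminate_eqs v g E) (eliminate_binds v g bs)
      | (I a b, I c d) :: E => unify fuel ((a, c) :: (b, d) :: E) bs
      | (N a, N c) :: E => unify fuel ((a, c) :: E) bs
      | _ => None
      end
  end.

Lemma subst_bind t v g f : t v = subst t g -> subst t (subst (bind v g) f) = subst t f.
Proof.
  intros Hv; rewrite subst_comp; apply subst_ext; intros u; unfold bind.
  destruct (Nat.eqb_spec u v); subst; auto.
Qed.

Lemma solves_eliminate t v g E : t v = subst t g -> solves t E -> solves t (eliminate_eqs v g E).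
Proof.
  intros Hv HE; apply Forall_map; eapply Forall_impl; [|exact HE].
  intros e; simpl; rewrite !subst_bind; auto.
Qed.

Lemma respects_eliminate t v g bs :
  t v = subst t g -> respects t bs -> respects t (eliminate_binds v g bs).
Proof.
  intros Hv Hbs; constructor; [exact Hv|]; apply Forall_map; eapply Forall_impl; [|exact Hbs].
  intros b; simpl; rewrite subst_bind; auto.
Qed.

Lemma unify_respects fuel E bs R t :
  unify fuel E bs = Some R -> solves t E -> respects t bs -> respects t R.
Proof.
  revert E bs; induction fuel as [|fuel IH]; intros E bs HR HE Hbs; [discriminate|].
  destruct E as [|[l r] E]; simpl in HR; [congruence|].
  inversion HE as [|? ? Hlr HE']; subst; simpl in Hlr.
  destruct l as [v|a b|a], r as [w|c d|c];
    solve [ discriminate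
          | eapply IH; [exact HR| apply solves_eliminate | apply respects_eliminate]; auto
          | simpl in Hlr; injection Hlr; intros;
            eapply IH; [exact HR | repeat constructor; auto | exact Hbs] ].
Qed.

Definition lookup (bs : list (nat * form)) (v : nat) : form :=
  match find (fun b => fst b =? v) bs with
  | Some b => snd b
  | None => V v
  end.

Lemma respects_lookup t bs v : respects t bs -> t v = subst t (lookup bs v).
Proof.
  intros Hbs; unfold lookup; induction Hbs as [|b bs Hb Hbs IH]; simpl; [reflexivity|].
  destruct (Nat.eqb_spec (fst b) v); [subst; exact Hb | exact IH].
Qed.

(* Unification can take exponentially many steps, so the fuel is a heuristic bound:
   running out of it only makes [mgu_of] fail. *)
Definition mgu_of (A B : form) : option (nat -> form) :=
  match unify (length (vars A) * length (vars B)) [(A, B)] [] with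
  | Some bs =>
      if form_eq_dec (subst (lookup bs) A) (subst (lookup bs) B) then Some (lookup bs) else None
  | None => None
  end.

Lemma mgu_of_mgu A B s : mgu_of A B = Some s -> mgu s A B.
Proof.
  unfold mgu_of; destruct (unify _ _ _) as [bs|] eqn:Hbs; [|discriminate].
  destruct form_eq_dec as [Hu|]; [|discriminate]; intros [= <-].
  split; [exact Hu|]; intros t Ht; exists t; intros v.
  apply respects_lookup; eapply unify_respects; [exact Hbs | repeat constructor; exact Ht | constructor].
Qed.

Definition swap (a b v : nat) : nat := if v =? a then b else if v =? b then a else v.

Lemma swap_inj a b : Injective (swap a b).
Proof.
  intros u v; unfold swap.
  destruct (Nat.eqb_spec u a), (Nat.eqb_spec v a), (Nat.eqb_spec u b), (Nat.eqb_spec v b); lia.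
Qed.

(* Numbers the variables in order of first occurrence, so that the last line of a
   derivation can be literally D1, D2 or D3; built from swaps so that it is injective. *)
Fixpoint number_vars (seen : list nat) (r : nat -> nat) (l : list nat) : nat -> nat :=
  match l with
  | [] => r
  | v :: l =>
      if in_dec Nat.eq_dec v seen then number_vars seen r l
      else number_vars (v :: seen) (fun u => swap (r v) (length seen) (r u)) l
  end.

Lemma number_vars_inj seen r l : Injective r -> Injective (number_vars seen r l).
Proof.
  revert seen r; induction l as [|v l IH]; intros seen r Hr; simpl; [exact Hr|].
  destruct in_dec; apply IH; [exact Hr|].
  intros u w Huw; apply Hr, (swap_inj _ _ _ _ Huw).
Qed.

Definition canonical (f : form) : form := rename (number_vars [] (fun v => v) (vars f)) f.

Lemma variant_canonical f : variant f (canonical f).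
Proof.
  eexists; split; [apply number_vars_inj; intros u v; exact id | reflexivity].
Qed.

Definition detach (P Q : form) : option form :=
  match P with
  | I A B =>
      match mgu_of A (shift (S (max_var P)) Q) with
      | Some s => Some (canonical (subst s B))
      | None => None
      end
  | _ => None
  end.

Lemma detach_cd P Q R : detach P Q = Some R -> cd P Q R.
Proof.
  destruct P as [|A B|]; simpl; try discriminate.
  destruct mgu_of as [s|] eqn:Hs; [|discriminate]; intros [= <-].
  exists A, B, (shift (S (Nat.max (max_var A) (max_var B))) Q), s.
  split; [reflexivity|]; split; [apply variant_shift|]; split.
  - intros v HP HQ; apply occurs_le_max_var in HP; apply occurs_shift in HQ; simpl in HP; lia.
  - split; [apply mgu_of_mgu, Hs | apply variant_canonical].
Qed.

Inductive step : Type :=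
| FromAxiom (A : form)
| Detach (major minor : nat).

Definition new_line (pf : list (form * just)) (s : step) : option (form * just) :=
  match s with
  | FromAxiom A => if in_dec form_eq_dec A axioms then Some (A, Ax) else None
  | Detach i j =>
      match line_form pf i, line_form pf j with
      | Some P, Some Q => option_map (fun R => (R, CD i j)) (detach P Q)
      | _, _ => None
      end
  end.

Fixpoint replay (pf : list (form * just)) (steps : list step) : option (list (form * just)) :=
  match steps with
  | [] => Some pf
  | s :: steps =>
      match new_line pf s with
      | Some l => replay (pf ++ [l]) steps
      | None => None
      end
  end.

Lemma line_form_lt pf i P : line_form pf i = Some P -> i < length pf.
Proof.
  unfold line_form; intros H; apply nth_error_Some; destruct nth_error; easy.
Qed.

Lemma line_form_app pf l i : i < length pf -> line_form (pf ++ l) i = line_form pf i.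
Proof. intros Hi; unfold line_form; rewrite nth_error_app1; auto. Qed.

Lemma valid_line_app pf l k : k < length pf -> valid_line pf k -> valid_line (pf ++ l) k.
Proof.
  intros Hk; unfold valid_line; rewrite nth_error_app1 by exact Hk.
  destruct (nth_error pf k) as [[F [|i j]]|]; auto.
  intros (Hi & Hj & P & Q & HP & HQ & Hcd).
  repeat split; auto; exists P, Q; rewrite !line_form_app by lia; auto.
Qed.

Lemma valid_new_line pf s l : new_line pf s = Some l -> valid_line (pf ++ [l]) (length pf).
Proof.
  intros Hl; unfold valid_line; rewrite nth_error_app2, Nat.sub_diag by lia.
  destruct s as [A|i j]; unfold new_line in Hl.
  - destruct (in_dec form_eq_dec A axioms) as [HA|]; [injection Hl as <-|discriminate].
    exists A; split; [exact HA | apply variant_refl].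
  - destruct (line_form pf i) as [P|] eqn:HP, (line_form pf j) as [Q|] eqn:HQ; try discriminate.
    destruct (detach P Q) as [R|] eqn:HR; [injection Hl as <-|discriminate].
    apply line_form_lt in HP as Hi; apply line_form_lt in HQ as Hj.
    repeat split; [exact Hi | exact Hj|].
    exists P, Q; rewrite !line_form_app by assumption; auto using detach_cd.
Qed.

Lemma replay_valid pf steps pf' :
  replay pf steps = Some pf' ->
  (forall k, k < length pf -> valid_line pf k) ->
  forall k, k < length pf' -> valid_line pf' k.
Proof.
  revert pf; induction steps as [|s steps IH]; intros pf Hpf Hvalid; simpl in Hpf.
  - injection Hpf as <-; exact Hvalid.
  - destruct new_line as [l|] eqn:Hl; [|discriminate].
    apply (IH _ Hpf); intros k Hk; rewrite length_app in Hk; simpl in Hk.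
    destruct (Nat.eq_dec k (length pf)) as [->|].
    + exact (valid_new_line _ _ _ Hl).
    + apply valid_line_app, Hvalid; lia.
Qed.

Fixpoint has_dnegb (f : form) : bool :=
  match f with
  | V _ => false
  | I a b => has_dnegb a || has_dnegb b
  | N (N _) => true
  | N a => has_dnegb a
  end.

Lemma has_dnegb_complete f : has_dneg f -> has_dnegb f = true.
Proof.
  intros [t Ht]; induction f as [v|a IHa b IHb|a IHa]; simpl in *.
  - destruct Ht as [[=]|[]].
  - destruct Ht as [[=]|[Ha|Hb]]; rewrite orb_true_iff; auto.
  - destruct Ht as [[= <-]|Ha]; [reflexivity|].
    destruct a; [destruct Ha as [[=]|[]] | apply IHa, Ha | reflexivity].
Qed.

Definition proof_lines (steps : list step) : list (form * just) :=
  match replay [] steps with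
  | Some pf => pf
  | None => []
  end.

Definition proves (steps : list step) (F : form) : bool :=
  match replay [] steps with
  | Some pf =>
      match line_form pf (length pf - 1) with
      | Some G => if form_eq_dec G F then forallb (fun l => negb (has_dnegb (fst l))) pf else false
      | None => false
      end
  | None => false
  end.

Lemma proves_sound steps F :
  proves steps F = true -> cd_proof (proof_lines steps) F /\ dn_free (proof_lines steps).
Proof.
  unfold proves, proof_lines; destruct (replay [] steps) as [pf|] eqn:Hpf; [|discriminate].
  destruct (line_form pf (length pf - 1)) as [G|] eqn:HG; [|discriminate].
  destruct (form_eq_dec G F) as [<-|]; [|discriminate]; intros Hdn.
  split; [split; [|split]|].
  - intros ->; discriminate.
  - apply (replay_valid _ _ _ Hpf); simpl; lia.
  - exact HG.
  - intros k F' i j Hk HF'; rewrite forallb_forall in Hdn.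
    specialize (Hdn _ (nth_error_In _ _ Hk)); simpl in Hdn.
    rewrite (has_dnegb_complete _ HF') in Hdn; discriminate.
Qed.

Definition D1_steps : list step :=
  [FromAxiom A2; FromAxiom A1; Detach 0 1; FromAxiom A3; Detach 1 1; Detach 3 4; Detach 2 5].

Lemma D1_proved : proves D1_steps D1 = true.
Proof. vm_compute; reflexivity. Qed.

Definition D2_steps : list step :=
  [FromAxiom A3; FromAxiom A2; FromAxiom A1; Detach 1 2; Detach 3 0; Detach 2 2;
   Detach 0 5; Detach 3 6; Detach 4 7; Detach 0 8; Detach 3 2; Detach 10 7;
   Detach 9 11; Detach 3 1; Detach 13 7; Detach 12 14; Detach 3 12; Detach 1 16;
   FromAxiom A4; Detach 3 18; Detach 1 19; Detach 17 20; Detach 3 21; Detach 1 22;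
   Detach 1 4; Detach 24 0; Detach 1 25; Detach 17 3; Detach 24 20; Detach 27 28;
   Detach 29 19; Detach 1 30; Detach 26 31; Detach 24 2; Detach 9 33; Detach 20 8;
   Detach 1 35; Detach 15 36; Detach 2 19; Detach 0 38; Detach 20 39; Detach 37 40;
   Detach 18 41; Detach 34 42; Detach 2 7; Detach 32 44; Detach 1 45; Detach 24 26;
   Detach 1 47; Detach 48 3; Detach 31 49; Detach 1 50; Detach 46 51; Detach 51 1;
   Detach 52 53; Detach 20 54; Detach 43 55; Detach 3 56; Detach 1 57; Detach 24 58;
   Detach 32 59; Detach 60 5; Detach 23 61; Detach 15 62].

Lemma D2_proved : proves D2_steps D2 = true.
Proof. vm_compute; reflexivity. Qed.

Definition D3_steps : list step :=
  [FromAxiom A2; Detach 0 0; FromAxiom A1; Detach 0 2; FromAxiom A3; Detach 3 4;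
   Detach 0 5; Detach 1 6; Detach 7 0; Detach 8 7; Detach 2 2; Detach 4 10;
   Detach 3 11; Detach 5 12; Detach 4 13; Detach 6 2; Detach 14 15; FromAxiom A4;
   Detach 3 2; Detach 18 12; Detach 14 19; Detach 3 0; Detach 21 12; Detach 20 22;
   Detach 3 17; Detach 0 24; Detach 25 13; Detach 0 26; Detach 23 27; Detach 2 24;
   Detach 4 29; Detach 25 30; Detach 28 31; Detach 17 32; Detach 16 33; Detach 6 4;
   Detach 0 35; Detach 3 20; Detach 0 37; Detach 38 3; Detach 6 25; Detach 39 40;
   Detach 41 24; Detach 0 42; Detach 36 43; Detach 2 12; Detach 44 45; Detach 0 46;
   Detach 6 36; Detach 0 48; Detach 49 3; Detach 43 50; Detach 0 51; Detach 47 52;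
   Detach 52 0; Detach 53 54; Detach 25 55; Detach 34 56; Detach 3 57; Detach 0 58;
   Detach 6 59; Detach 0 60; Detach 61 3; Detach 47 47; Detach 63 61; Detach 62 64;
   Detach 0 65; Detach 2 10; Detach 14 67; Detach 68 0; Detach 8 69; Detach 66 70;
   Detach 7 71; Detach 9 72].

Lemma D3_proved : proves D3_steps D3 = true.
Proof. vm_compute; reflexivity. Qed.

Theorem lemma6 :
  (exists pf, cd_proof pf D1 /\ dn_free pf) /\
  (exists pf, cd_proof pf D2 /\ dn_free pf) /\
  (exists pf, cd_proof pf D3 /\ dn_free pf).
Proof.
  split; [|split]; eexists; apply proves_sound.
  - exact D1_proved.
  - exact D2_proved.
  - exact D3_proved.
Qed.
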